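(* Let $(\tau,\{\mathbf R_s\}_{s\in\mathcal S})$ be a feasible TWAVRP solution. Then there exist arrival-time vectors $\bm a_s\in\mathcal X(\mathbf R_s,[e,\ell];\theta_s)$, $s\in\mathcal S$, such that (i) for every $i\in V_{\mathrm{cont}}$ and every $\beta\in\mathbb R$: either $a_{si}\le \beta+w_i/2$ for all $s\in\mathcal S$, or $a_{si}\ge \beta-w_i/2$ for all $s\in\mathcal S$; and (ii) for every $i\in V_{\mathrm{disc}}$ and every $b\in\{1,\dots,N_i-1\}$: either $a_{si}\le \bar y_{ib}$ for all $s\in\mathcal S$, or $a_{si}\ge \underline y_{i,b+1}$ for all $s\in\mathcal S$.
   Context: Let $G=(V,A)$ be a directed graph with $V=\{0,1,\dots,n\}$; node $0$ is the depot and $V_C=V\setminus\{0\}$ is the set of customers. The depot has operating window $[e_0,\ell_0]$, vehicles have capacity $Q$, and each customer $i\in V_C$ has an exogenous time window $[e_i,\ell_i]$. A vector of operational parameters $\theta$ consists of arc costs $c_{ij}\ge 0$ and arc travel times $t_{ij}\ge0$ for $(i,j)\in A$, and demands $q_i\ge 0$ and service times $u_i\ge 0$ for $i\in V_C$. The customer set is partitioned as $V_C=V_{\mathrm{cont}}\cup V_{\mathrm{disc}}$ (disjoint). For $i\in V_{\mathrm{cont}}$ a width $w_i\ge0$ with $e_i\le \ell_i-w_i$ is given and $TW_i=\{[y,y+w_i]: e_i\le y\le \ell_i-w_i\}$. For $i\in V_{\mathrm{disc}}$, $TW_i=\{[\underline y_{i1},\bar y_{i1}],\dots,[\underline y_{iN_i},\bar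 y_{iN_i}]\}$ is a finite set of intervals with $\underline y_{ib}\le\bar y_{ib}$, none contained in another, ordered so that $e_i=\underline y_{i1}<\dots<\underline y_{iN_i}$ and $\bar y_{i1}<\dots<\bar y_{iN_i}=\ell_i$. A route set $\mathbf R=(R_1,\dots,R_m)$ is a collection of pairwise disjoint nonempty sequences $R_k=(R_{k,1},\dots,R_{k,n_k})$ of distinct customers (every customer with positive demand appearing in exactly one sequence). For a vector $\tau=(\tau_1,\dots,\tau_n)$ of closed intervals, $\mathcal X(\mathbf R,\tau;\theta)$ is the set of $\bm a\in\mathbb R^n_{\ge0}$ with: $a_{R_{k,1}}\ge e_0+t_{0,R_{k,1}}$ for all $k$; $a_{R_{k,l+1}}-a_{R_{k,l}}\ge t_{R_{k,l},R_{k,l+1}}+u_{R_{k,l}}$ for all $k$ and $1\le l\le n_k-1$; $a_{R_{k,n_k}}\le \ell_0-t_{R_{k,n_k},0}-u_{R_{k,n_k}}$ for all $k$; and $a_i\in\tau_i$ for all $i\in V_C$. We write $\mathbf R\in\mathcal R(\tau;\theta)$ if $\sum_{i\in R_k}q_i\le Q$ for every $k$ and $\mathcal X(\mathbf R,\tau;\theta)\neq\emptyset$. Finitely many scenarios $\theta_1,\dots,\theta_S$ are given, $\mathcal S=\{1,\dots,S\}$. A feasible TWAVRP solution is a pair $(\tau,\{\mathbf R_s\}_{s\in\mathcal S})$ with $\tau_i\in TW_i$ for all $i\in V_C$ and $\mathbf R_s\in\mathcal R(\tau;\theta_s)$ for all $s$. $[e,\ell]$ denotes the vector $([e_1,\ell_1],\dots,[e_n,\ell_n])$,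 and $a_{si}$ denotes the $i$-th component of $\bm a_s$. *)

From Stdlib Require Import Reals Lra List.
Import ListNotations.
Open Scope R_scope.

(* Nodes are natural numbers: 0 is the depot, customers are 1..n. *)

Record Inst := mkInst {
  n : nat;
  arc : nat -> nat -> Prop;
  e0 : R; l0 : R;               (* depot window [e0, l0] *)
  Qcap : R;
  ew : nat -> R; lw : nat -> R;
  isCont : nat -> bool;         (* true: i in V_cont, false: i in V_disc *)
  w : nat -> R;                 (* widths for continuous customers *)
  Nw : nat -> nat;
  ylo : nat -> nat -> R;        (* underline y_{ib}, b = 1..N_i *)
  yhi : nat -> nat -> R         (* bar y_{ib}, b = 1..N_i *)
}.

Definition customer (I : Inst) (i : nat) : Prop := (1 <= i <= n I)%nat.

Definition InstWF (I : Inst) : Prop :=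
  (forall i, customer I i -> isCont I i = true ->
     0 <= w I i /\ ew I i <= lw I i - w I i) /\
  (forall i, customer I i -> isCont I i = false ->
     (1 <= Nw I i)%nat /\
     (forall b, (1 <= b <= Nw I i)%nat -> ylo I i b <= yhi I i b) /\
     ew I i = ylo I i 1 /\ yhi I i (Nw I i) = lw I i /\
     (forall b, (1 <= b < Nw I i)%nat ->
        ylo I i b < ylo I i (S b) /\ yhi I i b < yhi I i (S b))).

Record Theta := mkTheta {
  cost : nat -> nat -> R;
  tt : nat -> nat -> R;
  dem : nat -> R;
  svc : nat -> R
}.

Definition ThetaWF (I : Inst) (th : Theta) : Prop :=
  (forall i j, arc I i j -> 0 <= cost th i j /\ 0 <= tt th i j) /\
  (forall i, customer I i -> 0 <= dem th i /\ 0 <= svc th i).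

(* A closed interval [fst, snd]. *)
Definition interval := (R * R)%type.

Definition InTW (I : Inst) (i : nat) (iv : interval) : Prop :=
  if isCont I i then
    exists y, ew I i <= y <= lw I i - w I i /\ iv = (y, y + w I i)
  else
    exists b, (1 <= b <= Nw I i)%nat /\ iv = (ylo I i b, yhi I i b).

Definition exoTW (I : Inst) : nat -> interval := fun i => (ew I i, lw I i).

Definition RouteSet (I : Inst) (th : Theta) (Rs : list (list nat)) : Prop :=
  (forall r, In r Rs -> r <> []) /\
  (forall i, In i (concat Rs) -> customer I i) /\
  NoDup (concat Rs) /\
  (forall i, customer I i -> 0 < dem th i -> In i (concat Rs)).

Definition load (th : Theta) (r : list nat) : R :=
  fold_right (fun i acc => dem th i + acc) 0 r.

Fixpoint chainOK (th : Theta) (a : nat -> R) (x : nat) (rest : list nat) : Prop :=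
  match rest with
  | [] => True
  | y :: rest' => a y - a x >= tt th x y + svc th x /\ chainOK th a y rest'
  end.

Definition routeOK (I : Inst) (th : Theta) (a : nat -> R) (r : list nat) : Prop :=
  match r with
  | [] => True
  | x :: rest =>
      a x >= e0 I + tt th 0%nat x /\
      chainOK th a x rest /\
      a (last r 0%nat) <= l0 I - tt th (last r 0%nat) 0%nat - svc th (last r 0%nat)
  end.

Definition InX (I : Inst) (Rs : list (list nat)) (tau : nat -> interval)
    (th : Theta) (a : nat -> R) : Prop :=
  (forall i, customer I i -> 0 <= a i) /\
  (forall r, In r Rs -> routeOK I th a r) /\
  (forall i, customer I i -> fst (tau i) <= a i <= snd (tau i)).

Definition InCalR (I : Inst) (tau : nat -> interval) (th : Theta)
    (Rs : list (list nat)) : Prop :=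
  RouteSet I th Rs /\
  (forall r, In r Rs -> load th r <= Qcap I) /\
  exists a, InX I Rs tau th a.

(* Feasible TWAVRP solution; scenarios are indexed s = 0..S-1. *)
Definition Feasible (I : Inst) (S : nat) (theta : nat -> Theta)
    (tau : nat -> interval) (Rs : nat -> list (list nat)) : Prop :=
  (forall i, customer I i -> InTW I i (tau i)) /\
  (forall s, (s < S)%nat -> InCalR I tau (theta s) (Rs s)).

(* The arrival times of any feasible solution already work: each [a_s] lies in the
   assigned window [tau_i], which sits inside the exogenous window [e_i, l_i].  For a
   continuous customer all [a_si] lie in one interval of width [w_i], so they are all on
   the same side of any split point [beta] up to [w_i/2].  For a discrete customer the
   assigned window is some [b0]-th interval, and monotonicity of the endpoints puts it
   entirely below [bar y_ib] (if [b0 <= b]) or entirely above [underline y_{i,b+1}]. *)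
From Stdlib Require Import Reals List Lra Lia IndefiniteDescription.
Open Scope R_scope.

Lemma le_of_step_lt (f : nat -> R) (N : nat) :
  (forall b, (1 <= b < N)%nat -> f b < f (S b)) ->
  forall b b', (1 <= b <= b')%nat -> (b' <= N)%nat -> f b <= f b'.
Proof.
  intros Hstep b b' [Hb Hbb'] HN.
  induction Hbb' as [|b' Hbb' IH].
  - lra.
  - assert (f b' < f (S b')) by (apply Hstep; lia).
    assert (f b <= f b') by (apply IH; lia).
    lra.
Qed.

Lemma InTW_sub_exoTW (I : Inst) (i : nat) (iv : interval) :
  InstWF I -> customer I i -> InTW I i iv ->
  ew I i <= fst iv /\ snd iv <= lw I i.
Proof.
  intros [Hcont Hdisc] Hi. unfold InTW.
  destruct (isCont I i) eqn:Hc.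
  - intros [y [Hy ->]]. simpl. destruct (Hcont i Hi Hc). lra.
  - intros [b [Hb ->]]. simpl.
    destruct (Hdisc i Hi Hc) as [_ [_ [He [Hl Hstep]]]].
    rewrite He, <- Hl. split.
    + apply (le_of_step_lt (ylo I i) (Nw I i)); [intros; apply Hstep|..]; lia.
    + apply (le_of_step_lt (yhi I i) (Nw I i)); [intros; apply Hstep|..]; lia.
Qed.

Lemma InX_widen (I : Inst) (Rs : list (list nat)) (tau tau' : nat -> interval)
    (th : Theta) (a : nat -> R) :
  (forall i, customer I i -> fst (tau' i) <= fst (tau i) /\ snd (tau i) <= snd (tau' i)) ->
  InX I Rs tau th a -> InX I Rs tau' th a.
Proof.
  intros Hsub [Hnonneg [Hroutes Hwin]].
  split; [exact Hnonneg | split; [exact Hroutes |]].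
  intros i Hi. specialize (Hsub i Hi). specialize (Hwin i Hi). lra.
Qed.

Lemma arrivals_of_Feasible (I : Inst) (S : nat) (theta : nat -> Theta)
    (tau : nat -> interval) (Rs : nat -> list (list nat)) :
  Feasible I S theta tau Rs ->
  exists a : nat -> nat -> R,
    forall s, (s < S)%nat -> InX I (Rs s) tau (theta s) (a s).
Proof.
  intros [_ Hcal].
  apply (functional_choice (fun s a => (s < S)%nat -> InX I (Rs s) tau (theta s) a)).
  intros s. destruct (Nat.lt_ge_cases s S) as [Hs | Hs].
  - destruct (Hcal s Hs) as [_ [_ [a Ha]]]. exists a. auto.
  - exists (fun _ => 0). lia.
Qed.

Lemma width_split (P : nat -> Prop) (x : nat -> R) (y width beta : R) :
  (forall s, P s -> y <= x s <= y + width) ->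
  (forall s, P s -> x s <= beta + width / 2) \/
  (forall s, P s -> x s >= beta - width / 2).
Proof.
  intros Hx.
  destruct (Rle_lt_dec (y + width / 2) beta).
  - left. intros s Hs. specialize (Hx s Hs). lra.
  - right. intros s Hs. specialize (Hx s Hs). lra.
Qed.

Lemma disc_window_split (I : Inst) (i : nat) (P : nat -> Prop) (x : nat -> R) (b0 b : nat) :
  InstWF I -> customer I i -> isCont I i = false ->
  (1 <= b0 <= Nw I i)%nat -> (1 <= b <= Nw I i - 1)%nat ->
  (forall s, P s -> ylo I i b0 <= x s <= yhi I i b0) ->
  (forall s, P s -> x s <= yhi I i b) \/
  (forall s, P s -> x s >= ylo I i (b + 1)%nat).
Proof.
  intros [_ Hdisc] Hi Hc Hb0 Hb Hx.
  destruct (Hdisc i Hi Hc) as [_ [_ [_ [_ Hstep]]]].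
  destruct (Nat.le_gt_cases b0 b).
  - left. intros s Hs. specialize (Hx s Hs).
    assert (yhi I i b0 <= yhi I i b)
      by (apply (le_of_step_lt (yhi I i) (Nw I i)); [intros; apply Hstep|..]; lia).
    lra.
  - right. intros s Hs. specialize (Hx s Hs).
    assert (ylo I i (b + 1)%nat <= ylo I i b0)
      by (apply (le_of_step_lt (ylo I i) (Nw I i)); [intros; apply Hstep|..]; lia).
    lra.
Qed.

Theorem mainTheorem1 (I : Inst) (HI : InstWF I) (S : nat)
  (theta : nat -> Theta) (Htheta : forall s, (s < S)%nat -> ThetaWF I (theta s))
  (tau : nat -> interval) (Rs : nat -> list (list nat))
  (Hfeas : Feasible I S theta tau Rs) :
  exists a : nat -> nat -> R,
    (forall s, (s < S)%nat -> InX I (Rs s) (exoTW I) (theta s) (a s)) /\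
    (forall i, customer I i -> isCont I i = true -> forall beta : R,
       (forall s, (s < S)%nat -> a s i <= beta + w I i / 2) \/
       (forall s, (s < S)%nat -> a s i >= beta - w I i / 2)) /\
    (forall i, customer I i -> isCont I i = false ->
     forall b, (1 <= b <= Nw I i - 1)%nat ->
       (forall s, (s < S)%nat -> a s i <= yhi I i b) \/
       (forall s, (s < S)%nat -> a s i >= ylo I i (b + 1)%nat)).
Proof.
  destruct (arrivals_of_Feasible I S theta tau Rs Hfeas) as [a Ha].
  destruct Hfeas as [Htw _].
  assert (Hwin : forall i, customer I i ->
            forall s, (s < S)%nat -> fst (tau i) <= a s i <= snd (tau i))
    by (intros i Hi s Hs; apply (Ha s Hs); exact Hi).
  exists a. split; [| split].
  - intros s Hs. apply (InX_widen I (Rs s) tau); [| exact (Ha s Hs)].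
    intros i Hi. exact (InTW_sub_exoTW I i (tau i) HI Hi (Htw i Hi)).
  - intros i Hi Hc beta.
    pose proof (Htw i Hi) as Htwi. unfold InTW in Htwi. rewrite Hc in Htwi.
    destruct Htwi as [y [_ Hy]].
    apply (width_split _ _ y). pose proof (Hwin i Hi) as Hwini.
    rewrite Hy in Hwini. exact Hwini.
  - intros i Hi Hc b Hb.
    pose proof (Htw i Hi) as Htwi. unfold InTW in Htwi. rewrite Hc in Htwi.
    destruct Htwi as [b0 [Hb0 Hy]].
    apply (disc_window_split I i _ _ b0 b HI Hi Hc Hb0 Hb).
    pose proof (Hwin i Hi) as Hwini. rewrite Hy in Hwini. exact Hwini.
Qed.
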